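(* Let $V\sim\mathrm{Exp}(\lambda)$, let $V_1,V_2$ be independent copies of $V$, and write $V_{(1:2)}=\min(V_1,V_2)$, $V_{(2:2)}=\max(V_1,V_2)$. For $p_0\ge 0$ and $r\in[0,1]$ define $$R(p_0,r)=\begin{cases}2p_0+2r\,\mathbb{E}[V] & \text{if } p_0\le (1-r)\mathbb{E}[V_{(1:2)}],\\ p_0+r\,\mathbb{E}[V_{(2:2)}]+p_0\Pr[V_{(1:2)}>p_0] & \text{if } (1-r)\mathbb{E}[V_{(1:2)}]<p_0\le(1-r)\mathbb{E}[V_{(2:2)}],\\ 2p_0\Pr[V>p_0] & \text{if } p_0>(1-r)\mathbb{E}[V_{(2:2)}],\end{cases}$$ and let $u_c^*=\sup_{p_0\ge0,r\in[0,1]}R(p_0,r)$, $u_{c,r=0}^*=\sup_{p_0\ge0}R(p_0,0)$. Then $u_c^*=2\mathbb{E}[V]=2/\lambda$ and $u_{c,r=0}^*=\frac{3}{2\lambda}\big(1+e^{-3}\big)$, so $\Delta:=u_c^*-u_{c,r=0}^*=\frac{e^3-3}{2\lambda e^3}>0$, and the relative increase $\mathcal{I}:=\Delta/u_{c,r=0}^*=\frac{e^3-3}{3(1+e^3)}\approx 0.27$ for all $\lambda\in(1,\infty)$.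
   Context: $R(p_0,r)$ is the expected revenue of a creator selling two identical NFTs at common mint price $p_0$ with royalty rate $r$, where a risk-neutral speculator buys 2, 1 or 0 units in the three price regions respectively, reselling to the highest-valuation end-buyers at their valuations, and unsold units are offered by the creator to remaining end-buyers at $p_0$. *)

From HB Require Import structures.
From mathcomp Require Import all_boot all_order all_algebra.
From mathcomp Require Import all_classical all_reals all_analysis.
Set Implicit Arguments. Unset Strict Implicit. Unset Printing Implicit Defensive.
Import Order.TTheory GRing.Theory Num.Theory.
Import numFieldNormedType.Exports.
Local Open Scope classical_set_scope.
Local Open Scope ring_scope.

Section Revenue.
Context {R : realType}.
Notation mu := (@lebesgue_measure R).

(* V ~ Exp(lam) has density exponential_pdf lam (library: lam * exp(-lam x) on [0,+oo[). *)

Definition EV (lam : R) : R :=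
  fine (\int[mu]_x (x * exponential_pdf lam x)%:E)%E.

Definition PV_gt (lam p : R) : R := fine (exponential_prob lam `]p, +oo[).

(* E[g(V1,V2)] for V1, V2 independent copies of V: integral against the
   joint (product) density f(x) f(y). *)
Definition E2 (lam : R) (g : R -> R -> R) : R :=
  fine (\int[mu]_x \int[mu]_y
          (g x y * exponential_pdf lam x * exponential_pdf lam y)%:E)%E.

Definition Emin (lam : R) : R := E2 lam (fun x y => Num.min x y).
Definition Emax (lam : R) : R := E2 lam (fun x y => Num.max x y).
Definition Pmin_gt (lam p : R) : R :=
  E2 lam (fun x y => if p < Num.min x y then 1 else 0).

Definition revenue (lam p0 r : R) : R :=
  if p0 <= (1 - r) * Emin lam then 2 * p0 + 2 * r * EV lam
  else if p0 <= (1 - r) * Emax lam then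
    p0 + r * Emax lam + p0 * Pmin_gt lam p0
  else 2 * p0 * PV_gt lam p0.

Definition u_c (lam : R) : R :=
  sup [set y | exists p0 r, 0 <= p0 /\ 0 <= r <= 1 /\ y = revenue lam p0 r].

Definition u_c_r0 (lam : R) : R :=
  sup [set y | exists p0, 0 <= p0 /\ y = revenue lam p0 0].

End Revenue.

From HB Require Import structures.
From mathcomp Require Import all_boot all_order all_algebra.
From mathcomp Require Import all_classical all_reals all_analysis.
From mathcomp Require Import measurable_realfun.
From mathcomp Require Import ring lra.
Import Order.TTheory GRing.Theory Num.Theory.
Import numFieldNormedType.Exports.
Local Open Scope classical_set_scope.
Local Open Scope ring_scope.

(* For V ~ Exp(lam) every quantity entering R(p0, r) is an integral of
   (A x + B) e^{-c x} over a half-line or an interval, evaluated through its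
   explicit primitive: E[V] = 1/lam, E[min] = 1/(2 lam), E[max] = 3/(2 lam),
   Pr[V > p] = e^{-lam p} and Pr[min > p] = e^{-2 lam p}.  Hence
   R(p0, r) = rho(lam p0, r) / lam with rho independent of lam.  Using
   t e^{-t} <= 1/2 in each regime, rho <= 2 with equality at (t, r) = (0, 1);
   for r = 0 the maximum 3/2 (1 + e^{-3}) sits at the right end t = 3/2 of the
   middle regime, because s + s e^{-s} is increasing on [1, 3]. *)

Section integral_restrict.
Context {d} {T : measurableType d} {R : realType} {mu : {measure set T -> \bar R}}.

Lemma integral_restrict (D E : set T) (h : T -> \bar R) :
  E `<=` D -> (forall x, D x -> ~ E x -> h x = 0%E) ->
  (\int[mu]_(x in D) h x = \int[mu]_(x in E) h x)%E.
Proof.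
move=> ED hDE; rewrite [LHS]integral_mkcond [RHS]integral_mkcond.
apply: eq_integral => x _; rewrite !patchE.
case: (boolP (x \in E)) => [xE|/negP xE]; first by rewrite (mem_set (ED _ (set_mem xE))).
case: ifPn => // /set_mem Dx; apply: hDE => // Ex; exact/xE/mem_set.
Qed.

End integral_restrict.

Section exp_bounds.
Context {R : realType}.

Lemma expR1_ge2 : 2 <= expR (1 : R).
Proof. by rewrite -[leLHS]/(1 + 1) expR_ge1Dx. Qed.

Lemma xexpRN_le_half (x : R) : x * expR (- x) <= 2^-1.
Proof.
have x_le : x <= expR (x - 1) by rewrite -[leLHS](subrK 1) addrC expR_ge1Dx.
have eN1 : expR (x - 1) * expR (- x) = expR (-1) by rewrite -expRD; congr expR; ring.
apply: (le_trans (y := expR (-1))).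
  by rewrite -eN1 ler_pM2r ?expR_gt0.
by rewrite expRN lef_pV2 ?posrE ?expR_gt0 // expR1_ge2.
Qed.

Lemma xDxexpRN_le (s : R) : 1 <= s <= 3 -> s + s * expR (- s) <= 3 + 3 * expR (-3).
Proof.
(* With [u = 3 - s] the claim reads [(3 - u) e^u - 3 <= u e^3], which follows
   from [e^u - 1 <= u e^u] and [2 e^u <= 2 e^2 <= e^3]. *)
move=> /andP[s_ge1 s_le3]; set u := 3 - s.
have u_ge0 : 0 <= u by rewrite subr_ge0.
have eu_le : expR u <= expR 2 by rewrite ler_expR /u; lra.
have eu_ge0 := expR_ge0 u.
have e3 : expR 3 = expR 2 * expR 1 :> R by rewrite -expRD; congr expR; ring.
have e3V : expR 3 * expR (-3) = 1 :> R by rewrite expRxMexpNx_1.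
have expRNs : expR (- s) = expR u * expR (-3) by rewrite -expRD; congr expR; rewrite /u; ring.
have eu_sub : expR u - 1 <= u * expR u.
  have := ler_wpM2l eu_ge0 (expR_ge1Dx (- u)).
  by rewrite expRxMexpNx_1; lra.
have key : s * expR u - 3 <= u * expR 3.
  have h1 : 0 <= u * (expR 2 - expR u) by rewrite mulr_ge0 // subr_ge0.
  have h2 : 0 <= u * expR 2 * (expR 1 - 2).
    by rewrite mulr_ge0 ?mulr_ge0 ?expR_ge0 // subr_ge0 expR1_ge2.
  rewrite e3 /u; rewrite /u in h1 h2 eu_sub; nra.
have := ler_wpM2r (expR_ge0 (-3)) key.
rewrite expRNs -mulrA e3V mulr1 /u; nra.
Qed.

End exp_bounds.

Section affine_exponential.
Context {R : realType}.
Implicit Types A B c x : R.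

Definition affexp A B c x := (A * x + B) * expR (- c * x).

Lemma is_derive_affexp A B c x :
  is_derive x 1 (affexp A B c) (affexp (- c * A) (A - c * B) c x).
Proof.
have dexp : is_derive x 1 (expR \o ( *%R (- c))) (expR (- c * x) * (- c)).
  by apply: is_derive1_comp; apply: is_derive_eq; rewrite /GRing.scale /= mulr1.
apply: is_derive_eq; rewrite /affexp /GRing.scale /=; ring.
Qed.

Lemma affexp_continuous A B c : continuous (affexp A B c).
Proof.
move=> x; apply/differentiable_continuous/derivable1_diffP.
by have [] := is_derive_affexp A B c x.
Qed.

Lemma expRNM_cvgy c : 0 < c -> expR (- c * x) @[x --> +oo] --> 0.
Proof.
move=> c_gt0.
have -> : (fun x => expR (- c * x)) = (fun z => expR (- z)) \o ( *%R c).
  by apply: funext => x; rewrite /= mulNr.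
apply: (@cvg_comp _ _ _ _ _ _ (pinfty_nbhs R)); last exact: cvgr_expR.
exact: gt0_cvgMry.
Qed.

Lemma xexpRNM_cvgy c : 0 < c -> x * expR (- c * x) @[x --> +oo] --> 0.
Proof.
move=> c_gt0; apply: (@squeeze_cvgr _ _ _ _ (cst 0) (fun x => c^-1 * expR (- (c / 2) * x))).
- near=> x; have x_ge0 : 0 <= x by near: x; exact: nbhs_pinfty_ge.
  rewrite mulr_ge0 ?expR_ge0 //=.
  have -> : x * expR (- c * x) = 2 / c * ((c / 2 * x) * expR (- (c / 2 * x))) * expR (- (c / 2) * x).
    have -> : expR (- c * x) = expR (- (c / 2 * x)) * expR (- (c / 2) * x).
      by rewrite -expRD; congr expR; field.
    by field; rewrite gt_eqF.
  rewrite ler_pM2r ?expR_gt0 // mulrAC ler_pdivrMr // mulVf ?gt_eqF //.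
  by rewrite -ler_pdivlMl // mulr1 xexpRN_le_half.
- exact: cvg_cst.
- by rewrite -(mulr0 c^-1); apply: cvgMl_tmp; apply: expRNM_cvgy; rewrite divr_gt0.
Unshelve. all: end_near. Qed.

Lemma affexp_cvgy A B c : 0 < c -> affexp A B c x @[x --> +oo] --> 0.
Proof.
move=> c_gt0.
have -> : affexp A B c = (fun x => A * (x * expR (- c * x)) + B * expR (- c * x)).
  by apply: funext => x; rewrite /affexp; ring.
suff : A * (x * expR (- c * x)) + B * expR (- c * x) @[x --> +oo] --> A * 0 + B * 0.
  by rewrite !mulr0 addr0.
by apply: cvgD; apply: cvgMl_tmp; [exact: xexpRNM_cvgy | exact: expRNM_cvgy].
Qed.

End affine_exponential.

Section improper_integrals.
Context {R : realType}.
Notation mu := (@lebesgue_measure R).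
Implicit Types A B c a b : R.

Lemma measurable_affexp A B c (D : set R) : measurable_fun D (affexp A B c).
Proof.
by apply: measurable_funTS; apply: continuous_measurable_fun; exact: affexp_continuous.
Qed.

Lemma ge0_integral_itv_cy_primitive {f F : R -> R} {a : R} :
  continuous f -> (forall x : R, is_derive x 1 F (f x)) -> F x @[x --> +oo] --> 0 ->
  (forall x, a <= x -> 0 <= f x) ->
  (\int[mu]_(x in `[a, +oo[) (f x)%:E = (- F a)%:E)%E.
Proof.
move=> f_cont F'f F_cvg f_ge0.
have F_cont : continuous F.
  move=> x; apply/differentiable_continuous/derivable1_diffP.
  by have [] := F'f x.
rewrite (ge0_continuous_FTC2y f_ge0 (continuous_subspaceT f_cont) F_cvg).
- by rewrite sub0e.
- by move=> x _; have [] := F'f x.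
- exact/cvg_at_right_filter/F_cont.
- by move=> x _; rewrite derive1E; have [_ ->] := F'f x.
Qed.

Lemma ge0_integral_itv_cy_split {h : R -> R} {a b : R} :
  a <= b -> measurable_fun `[a, +oo[ h -> (forall x, a <= x -> 0 <= h x) ->
  (\int[mu]_(x in `[a, +oo[) (h x)%:E =
   \int[mu]_(x in `[a, b[) (h x)%:E + \int[mu]_(x in `[b, +oo[) (h x)%:E)%E.
Proof.
move=> ab mh h_ge0.
have aby := @itv_bndbnd_setU _ _ (BLeft a) (BLeft b) (BInfty _ false).
rewrite aby ?bnd_simp //; apply: ge0_integral_setU => //=.
- by rewrite -aby ?bnd_simp //; exact/measurable_EFinP.
- move=> x [] /=; rewrite in_itv /= => /andP[ax _]; rewrite lee_fin; apply: h_ge0 => //.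
  exact: le_trans ax.
- apply/disj_setPS => x [] /=; rewrite !in_itv /= => /andP[_ xb] /andP[bx _].
  by move: (lt_le_trans xb bx); rewrite ltxx.
Qed.

Lemma affexp_ge0 A B c a x :
  0 <= A -> 0 <= A * a + B -> a <= x -> 0 <= affexp A B c x.
Proof.
move=> A_ge0 Aa_ge0 ax; rewrite mulr_ge0 ?expR_ge0 //.
by apply: le_trans Aa_ge0 _; rewrite lerD2r ler_wpM2l.
Qed.

Lemma integral_affexpD_itv_cy A B c A' B' c' a : 0 < c -> 0 < c' ->
  (forall x, a <= x -> 0 <= affexp A B c x + affexp A' B' c' x) ->
  (\int[mu]_(x in `[a, +oo[) (affexp A B c x + affexp A' B' c' x)%:E =
   (affexp (A / c) (B / c + A / c ^+ 2) c a +
    affexp (A' / c') (B' / c' + A' / c' ^+ 2) c' a)%:E)%E.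
Proof.
move=> c_gt0 c'_gt0 f_ge0.
pose F x := - affexp (A / c) (B / c + A / c ^+ 2) c x
            - affexp (A' / c') (B' / c' + A' / c' ^+ 2) c' x.
have F'f (x : R) : is_derive x 1 F (affexp A B c x + affexp A' B' c' x).
  have := is_derive_affexp (A / c) (B / c + A / c ^+ 2) c x.
  have := is_derive_affexp (A' / c') (B' / c' + A' / c' ^+ 2) c' x.
  move=> dF' dF; apply: is_derive_eq; rewrite /affexp.
  by field; rewrite !gt_eqF.
have F_cvg : F x @[x --> +oo] --> 0.
  suff : F x @[x --> +oo] --> - 0 - 0 by rewrite subr0 oppr0.
  by apply: cvgB; [apply: cvgN|]; exact: affexp_cvgy.
rewrite (ge0_integral_itv_cy_primitive _ F'f F_cvg f_ge0).
  by congr EFin; rewrite /F; ring.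
by move=> x; apply: continuousD; exact: affexp_continuous.
Qed.

Lemma integral_affexp_itv_cy A B c a : 0 < c -> 0 <= A -> 0 <= A * a + B ->
  (\int[mu]_(x in `[a, +oo[) (affexp A B c x)%:E =
   (affexp (A / c) (B / c + A / c ^+ 2) c a)%:E)%E.
Proof.
move=> c_gt0 A_ge0 Aa_ge0.
transitivity (\int[mu]_(x in `[a, +oo[) (affexp A B c x + affexp 0 0 c x)%:E)%E.
  by apply: eq_integral => x _; rewrite /affexp !mul0r add0r mul0r addr0.
rewrite integral_affexpD_itv_cy //; first by congr EFin; rewrite /affexp; ring.
by move=> x ax; rewrite {2}/affexp !mul0r add0r mul0r addr0; exact: affexp_ge0 ax.
Qed.

Lemma integral_affexp_itv_co A B c a b : 0 < c -> a <= b -> 0 <= A -> 0 <= A * a + B ->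
  (\int[mu]_(x in `[a, b[) (affexp A B c x)%:E =
   (affexp (A / c) (B / c + A / c ^+ 2) c a - affexp (A / c) (B / c + A / c ^+ 2) c b)%:E)%E.
Proof.
move=> c_gt0 ab A_ge0 Aa_ge0.
have Ab_ge0 : 0 <= A * b + B by apply: le_trans Aa_ge0 _; rewrite lerD2r ler_wpM2l.
have := ge0_integral_itv_cy_split ab
  (measurable_affexp A B c _)
  (fun x => affexp_ge0 _ _ c _ x A_ge0 Aa_ge0).
rewrite !integral_affexp_itv_cy //.
have : (0 <= \int[mu]_(x in `[a, b[) (affexp A B c x)%:E)%E.
  apply: integral_ge0 => x; rewrite /= in_itv /= => /andP[ax _].
  by rewrite lee_fin; exact: affexp_ge0 ax.
case: (\int[mu]_(x in _) _)%E => [r _ /eqP| //|//].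
by rewrite -EFinD eqe => /eqP ->; congr EFin; ring.
Qed.

End improper_integrals.

Section exponential_moments.
Context {R : realType}.
Notation mu := (@lebesgue_measure R).
Variable lam : R.
Hypothesis lam_gt0 : 0 < lam.

Local Notation pdf := (exponential_pdf lam).

Let pdf_affexp y : 0 <= y -> pdf y = affexp 0 lam lam y.
Proof. by move=> y0; rewrite exponential_pdfE // /affexp mul0r add0r. Qed.

Let expR2 x : expR (- (2 * lam) * x) = expR (- lam * x) ^+ 2.
Proof. by rewrite -expRM_natl; congr expR; ring. Qed.

Let lam_neq0 : lam != 0. Proof. by rewrite gt_eqF. Qed.
Let lam_ge0 : 0 <= lam. Proof. exact: ltW. Qed.

Let pdf_ge0 y : 0 <= pdf y. Proof. exact: exponential_pdf_ge0. Qed.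

Let pdf0 y : y < 0 -> pdf y = 0.
Proof. exact: lt0_exponential_pdf. Qed.

Let integralT_pdf (h : R -> R) :
  (\int[mu]_y (h y * pdf y)%:E = \int[mu]_(y in `[0%R, +oo[) (h y * pdf y)%:E)%E.
Proof.
apply: integral_restrict => // y _; rewrite /= in_itv /= andbT => /negP; rewrite -ltNge.
by move/pdf0 ->; rewrite mulr0.
Qed.

Lemma EV_exponential : EV lam = lam^-1.
Proof.
rewrite /EV integralT_pdf (@eq_integral _ _ _ mu _ (fun x => (affexp lam 0 lam x)%:E)); last first.
  move=> x; rewrite inE /= in_itv /= andbT => x0.
  by rewrite pdf_affexp // /affexp; congr EFin; ring.
rewrite integral_affexp_itv_cy ?mulr0 ?addr0 //=.
by rewrite /affexp !mulr0 expR0 mulr1; field.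
Qed.

Lemma PV_gt_exponential p : 0 <= p -> PV_gt lam p = expR (- lam * p).
Proof.
move=> p0; rewrite /PV_gt /exponential_prob integral_itv_obnd_cbnd; last first.
  by apply/measurable_EFinP/measurable_funTS; exact: measurable_exponential_pdf.
rewrite (@eq_integral _ _ _ mu _ (fun x => (affexp 0 lam lam x)%:E)); last first.
  move=> x; rewrite inE /= in_itv /= andbT => px.
  by rewrite -pdf_affexp // (le_trans p0 px).
rewrite integral_affexp_itv_cy ?mul0r ?add0r //=.
by rewrite /affexp; field.
Qed.

Lemma E2_exponential (g : R -> R -> R) (phi : R -> R) :
  (forall x, 0 <= x -> (\int[mu]_y (g x y * pdf x * pdf y)%:E = (phi x)%:E)%E) ->
  E2 lam g = fine (\int[mu]_(x in `[0%R, +oo[) (phi x)%:E)%E.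
Proof.
move=> inner; rewrite /E2 (@integral_restrict _ _ _ mu _ `[0%R, +oo[) //.
  congr fine; apply: eq_integral => x; rewrite inE /= in_itv /= andbT; exact: inner.
move=> x _; rewrite /= in_itv /= andbT => /negP; rewrite -ltNge => /pdf0 x0.
by apply: integral0_eq => y _; rewrite x0 mulr0 mul0r.
Qed.

Lemma integral_min_exponential x : 0 <= x ->
  (\int[mu]_y (Num.min x y * pdf x * pdf y)%:E =
   (expR (- lam * x) - expR (- (2 * lam) * x))%:E)%E.
Proof.
move=> x0; rewrite integralT_pdf (ge0_integral_itv_cy_split x0); last 2 first.
- apply: measurable_funM; last by apply: measurable_funTS; exact: measurable_exponential_pdf.
  apply: measurable_funM; last exact: measurable_cst.
  by apply: measurable_minr; [exact: measurable_cst | exact: measurable_id].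
- move=> y y0; rewrite !mulr_ge0 ?pdf_ge0 //.
  by rewrite le_min x0.
rewrite (@eq_integral _ _ _ mu `[0%R, x[ (fun y => (affexp (pdf x * lam) 0 lam y)%:E));
  last first.
  move=> y; rewrite inE /= in_itv /= => /andP[y0 yx].
  by rewrite min_r ?ltW // (pdf_affexp y) // /affexp; congr EFin; ring.
rewrite (@eq_integral _ _ _ mu `[x, +oo[ (fun y => (affexp 0 (x * pdf x * lam) lam y)%:E));
  last first.
  move=> y; rewrite inE /= in_itv /= andbT => xy.
  by rewrite min_l // (pdf_affexp y) ?(le_trans x0 xy) // /affexp; congr EFin; ring.
rewrite integral_affexp_itv_co ?mulr0 ?addr0 ?mulr_ge0 ?pdf_ge0 //.
rewrite integral_affexp_itv_cy ?mul0r ?add0r ?mulr_ge0 ?pdf_ge0 //.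
by rewrite -EFinD pdf_affexp // expR2 /affexp !mulr0 expR0; congr EFin; field.
Qed.

Lemma integral_max_exponential x : 0 <= x ->
  (\int[mu]_y (Num.max x y * pdf x * pdf y)%:E =
   (lam * x * expR (- lam * x) + expR (- (2 * lam) * x))%:E)%E.
Proof.
move=> x0; rewrite integralT_pdf (ge0_integral_itv_cy_split x0); last 2 first.
- apply: measurable_funM; last by apply: measurable_funTS; exact: measurable_exponential_pdf.
  apply: measurable_funM; last exact: measurable_cst.
  by apply: measurable_maxr; [exact: measurable_cst | exact: measurable_id].
- move=> y y0; rewrite !mulr_ge0 ?pdf_ge0 //.
  by rewrite le_max x0.
rewrite (@eq_integral _ _ _ mu `[0%R, x[ (fun y => (affexp 0 (x * pdf x * lam) lam y)%:E));
  last first.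
  move=> y; rewrite inE /= in_itv /= => /andP[y0 yx].
  by rewrite max_l ?ltW // (pdf_affexp y) // /affexp; congr EFin; ring.
rewrite (@eq_integral _ _ _ mu `[x, +oo[ (fun y => (affexp (pdf x * lam) 0 lam y)%:E));
  last first.
  move=> y; rewrite inE /= in_itv /= andbT => xy.
  by rewrite max_r // (pdf_affexp y) ?(le_trans x0 xy) // /affexp; congr EFin; ring.
rewrite integral_affexp_itv_co ?mul0r ?add0r ?mulr_ge0 ?pdf_ge0 //.
rewrite integral_affexp_itv_cy ?addr0 ?mulr_ge0 ?pdf_ge0 //.
by rewrite -EFinD pdf_affexp // expR2 /affexp !mulr0 expR0; congr EFin; field.
Qed.

Lemma integral_min_gt_exponential p x : 0 <= p ->
  (\int[mu]_y ((if p < Num.min x y then 1 else 0) * pdf x * pdf y)%:E =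
   (if p < x then pdf x * expR (- lam * p) else 0)%:E)%E.
Proof.
move=> p0; have [px|xp] := ltP p x; last first.
  apply: integral0_eq => y _.
  by rewrite lt_min ltNge xp /= !mul0r.
rewrite (@integral_restrict _ _ _ mu _ `]p, +oo[) //; last first.
  by move=> y _; rewrite /= in_itv /= andbT lt_min px /= => /negP/negbTE ->; rewrite !mul0r.
rewrite (@eq_integral _ _ _ mu _ (fun y => (affexp 0 (pdf x * lam) lam y)%:E)); last first.
  move=> y; rewrite inE /= in_itv /= andbT => py.
  rewrite lt_min px py mul1r (pdf_affexp y) ?(le_trans p0 (ltW py)) //.
  by rewrite /affexp; congr EFin; ring.
rewrite integral_itv_obnd_cbnd; last first.
  by apply/measurable_EFinP; exact: measurable_affexp.
rewrite integral_affexp_itv_cy ?mul0r ?add0r ?mulr_ge0 ?pdf_ge0 //.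
by rewrite /affexp; congr EFin; field.
Qed.

Lemma Emin_exponential : Emin lam = (2 * lam)^-1.
Proof.
rewrite /Emin (E2_exponential _ _ integral_min_exponential).
rewrite (@eq_integral _ _ _ mu _
  (fun x => (affexp 0 1 lam x + affexp 0 (-1) (2 * lam) x)%:E)); last first.
  by move=> x _; rewrite /affexp; congr EFin; ring.
rewrite integral_affexpD_itv_cy ?mulr_gt0 //=.
  by rewrite /affexp !mulr0 expR0; field.
move=> x x0; rewrite /affexp !mul0r !add0r mul1r mulN1r subr_ge0 ler_expR.
by have := mulr_ge0 lam_ge0 x0; nra.
Qed.

Lemma Emax_exponential : Emax lam = 3 / (2 * lam).
Proof.
rewrite /Emax (E2_exponential _ _ integral_max_exponential).
rewrite (@eq_integral _ _ _ mu _
  (fun x => (affexp lam 0 lam x + affexp 0 1 (2 * lam) x)%:E)); last first.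
  by move=> x _; rewrite /affexp; congr EFin; ring.
rewrite integral_affexpD_itv_cy ?mulr_gt0 //=.
  by rewrite /affexp !mulr0 expR0; field.
move=> x x0; rewrite addr_ge0 //; first by apply: (affexp_ge0 _ _ _ 0); rewrite ?mulr0 ?addr0.
by rewrite /affexp mul0r add0r mul1r expR_ge0.
Qed.

Lemma Pmin_gt_exponential p : 0 <= p -> Pmin_gt lam p = expR (- (2 * lam) * p).
Proof.
move=> p0; rewrite /Pmin_gt (E2_exponential _ _ (fun x _ => integral_min_gt_exponential p x p0)).
rewrite (@integral_restrict _ _ _ mu _ `]p, +oo[); last 2 first.
- by move=> x; rewrite /= !in_itv /= !andbT => /(le_lt_trans p0)/ltW.
- by move=> x _; rewrite /= in_itv /= andbT => /negP/negbTE ->.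
rewrite (@eq_integral _ _ _ mu _ (fun x => (affexp 0 (lam * expR (- lam * p)) lam x)%:E)).
  rewrite integral_itv_obnd_cbnd; last by apply/measurable_EFinP; exact: measurable_affexp.
  rewrite integral_affexp_itv_cy ?mul0r ?add0r ?mulr_ge0 ?expR_ge0 //=.
  by rewrite expR2 /affexp; field.
move=> x; rewrite inE /= in_itv /= andbT => px; rewrite px pdf_affexp ?(le_trans p0 (ltW px)) //.
by rewrite /affexp; congr EFin; ring.
Qed.

End exponential_moments.

Section revenue_bounds.
Context {R : realType}.
Implicit Types t r : R.

Definition unit_revenue t r : R :=
  if t <= (1 - r) / 2 then 2 * t + 2 * r
  else if t <= 3 * (1 - r) / 2 then t + 3 / 2 * r + t * expR (- (2 * t))
  else 2 * t * expR (- t).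

Lemma unit_revenue_le2 t r : 0 <= t -> 0 <= r <= 1 -> unit_revenue t r <= 2.
Proof.
move=> t_ge0 /andP[r_ge0 r_le1]; rewrite /unit_revenue.
have := xexpRN_le_half (2 * t); have := xexpRN_le_half t.
case: ifPn => [t_le _ _|_]; first lra.
by case: ifPn => t_le; lra.
Qed.

Lemma unit_revenue0_le t : 0 <= t -> unit_revenue t 0 <= 3 / 2 * (1 + expR (-3)).
Proof.
move=> t_ge0; rewrite /unit_revenue subr0 mulr1 mulr0 addr0.
have := expR_ge0 (-3 : R); have := xexpRN_le_half t.
case: ifPn => [t_le|]; first lra.
rewrite -ltNge => t_gt; case: ifPn => [t_le|_]; last lra.
have t2 : 1 <= 2 * t <= 3 by apply/andP; split; lra.
by have := xDxexpRN_le _ t2; lra.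
Qed.

Lemma revenue_exponential (lam p0 r : R) : 0 < lam -> 0 <= p0 ->
  revenue lam p0 r = unit_revenue (lam * p0) r / lam.
Proof.
move=> lam_gt0 p0_ge0; have lam_neq0 : lam != 0 by rewrite gt_eqF.
rewrite /revenue /unit_revenue Emin_exponential // Emax_exponential // EV_exponential //.
rewrite Pmin_gt_exponential // PV_gt_exponential //.
have le_div a : (p0 <= a / lam) = (lam * p0 <= a) by rewrite ler_pdivlMr // mulrC.
rewrite (_ : (1 - r) * (2 * lam)^-1 = (1 - r) / 2 / lam); last by field.
rewrite (_ : (1 - r) * (3 / (2 * lam)) = 3 * (1 - r) / 2 / lam); last by field.
rewrite !le_div !mulNr -[2 * lam * p0]mulrA.
by case: ifP => _; [|case: ifP => _]; field.
Qed.

Lemma sup_attained (S : set R) (M : R) : S M -> ubound S M -> sup S = M.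
Proof.
move=> SM ubM; apply/eqP; rewrite eq_le ge_sup //=; last by exists M.
by apply: ub_le_sup => //; exists M.
Qed.

Lemma u_c_exponential (lam : R) : 0 < lam -> u_c lam = 2 / lam.
Proof.
move=> lam_gt0; apply: sup_attained.
  exists 0, 1; split=> //; split; first by rewrite ler01 lexx.
  by rewrite revenue_exponential // mulr0 /unit_revenue subrr !mul0r lexx /=; ring.
move=> _ [p0 [r [p0_ge0 [r01 ->]]]].
rewrite revenue_exponential // ler_pM2r ?invr_gt0 //.
by apply: unit_revenue_le2 => //; exact: mulr_ge0 (ltW lam_gt0) p0_ge0.
Qed.

Lemma u_c_r0_exponential (lam : R) : 0 < lam -> u_c_r0 lam = 3 / (2 * lam) * (1 + expR (-3)).
Proof.
move=> lam_gt0; have lam_neq0 : lam != 0 by rewrite gt_eqF.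
have -> : 3 / (2 * lam) * (1 + expR (-3)) = 3 / 2 * (1 + expR (-3)) / lam by field.
apply: sup_attained.
  exists (3 / (2 * lam)); split; first by rewrite divr_ge0 ?mulr_ge0 ?ltW.
  rewrite revenue_exponential ?divr_ge0 ?mulr_ge0 ?ltW //.
  rewrite (_ : lam * (3 / (2 * lam)) = 3 / 2); last by field.
  rewrite /unit_revenue subr0 mulr1 lexx ifF; last by apply/negbTE; rewrite -ltNge; lra.
  by rewrite (_ : - (2 * (3 / 2)) = -3); [ring | field].
move=> _ [p0 [p0_ge0 ->]].
rewrite revenue_exponential // ler_pM2r ?invr_gt0 //.
by apply: unit_revenue0_le; exact: mulr_ge0 (ltW lam_gt0) p0_ge0.
Qed.

End revenue_bounds.

Theorem lemma5 (R : realType) (lam : R) (hlam : 1 < lam) :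
  let Delta := u_c lam - u_c_r0 lam in
  [/\ u_c lam = 2 * EV lam /\ EV lam = 1 / lam,
      u_c_r0 lam = 3 / (2 * lam) * (1 + expR (-3)),
      Delta = (expR 3 - 3) / (2 * lam * expR 3), 0 < Delta
    & Delta / u_c_r0 lam = (expR 3 - 3) / (3 * (1 + expR 3))].
Proof.
have lam_gt0 : 0 < lam by apply: lt_trans hlam.
have lam_neq0 : lam != 0 by rewrite gt_eqF.
have e3_gt3 : 3 < expR 3 :> R by apply: lt_le_trans (expR_ge1Dx 3); lra.
have e3_neq0 : expR 3 != 0 :> R by rewrite gt_eqF ?expR_gt0.
have e3D1_neq0 : 1 + expR 3 != 0 :> R by rewrite gt_eqF // addr_gt0 ?expR_gt0.
rewrite /= u_c_exponential // u_c_r0_exponential // EV_exponential // expRN.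
split.
- by split=> //; field.
- by [].
- by field; rewrite e3_neq0 lam_neq0.
- rewrite (_ : _ - _ = (expR 3 - 3) / (2 * lam * expR 3)); last first.
    by field; rewrite e3_neq0 lam_neq0.
  by rewrite divr_gt0 ?mulr_gt0 ?expR_gt0 // subr_gt0.
- by field; rewrite e3_neq0 lam_neq0 e3D1_neq0.
Qed.
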